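(* Consider Algorithm 3 (described in the context) under the Standing Assumption, Matrix Assumption and Gradient Assumption of the context. For all $k\in\mathbb{N}$, $\mathbb{E}_k[\bar d_k]=d_k$, $\mathbb{E}_k[\bar u_k]=u_k$, and $\mathbb{E}_k[\bar y_k]=y_k$. Moreover, there exists $\kappa_d>0$, independent of $k$ and of the run of the algorithm, such that $\mathbb{E}_k[\|\bar d_k-d_k\|_2]\le\kappa_d\sqrt M$ for all $k$.
   Context: Problem: $\min_x f(x)$ s.t. $c(x)=0$, $f(x)=\mathbb{E}[F(x,\omega)]$, $c:\mathbb{R}^n\to\mathbb{R}^m$ deterministic. Notation: $g_k=\nabla f(x_k)$, $c_k=c(x_k)$, $J_k=\nabla c(x_k)^T$; $\Delta q(x,\tau,g,H,d)=-\tau(g^Td+\frac12\max\{d^THd,0\})+\|c(x)\|_1$. Standing Assumption: an open convex set $\mathcal X$ contains all iterates; $f$ is $C^1$, bounded below on $\mathcal X$, $\nabla f$ bounded and $L$-Lipschitz on $\mathcal X$; $c$, $\nabla c^T$ bounded on $\mathcal X$; $\nabla c_i$ is $\gamma_i$-Lipschitz on $\mathcal X$; singular values of $\nabla c(x)^T$ bounded away from zero uniformly over $\mathcal X$; $\Gamma:=\sum_i\gamma_i$. Matrix Assumption: deterministic symmetric $H_k$, chosen independently of the stochastic gradients, with $\|H_k\|_2\le\kappa_H$ and $u^TH_ku\ge\zeta\|u\|_2^2$ whenever $J_ku=0$. Algorithm 3 (inputs $x_0$, $\bar\tau_{-1}>0$, $\epsilon,\sigma\in(0,1)$, $\bar\xi_{-1}>0$,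 $\{\beta_k\}\subset(0,1]$, $\theta\ge0$): at iteration $k$, obtain stochastic gradient $\bar g_k$; $(\bar d_k,\bar y_k)$ solves $H_k\bar d_k+J_k^T\bar y_k=-\bar g_k$, $J_k\bar d_k=-c_k$ (assumed $\bar d_k\neq0$). $\bar\tau_k^{trial}=\infty$ if $\bar g_k^T\bar d_k+\max\{\bar d_k^TH_k\bar d_k,0\}\le0$, else $\frac{(1-\sigma)\|c_k\|_1}{\bar g_k^T\bar d_k+\max\{\bar d_k^TH_k\bar d_k,0\}}$; $\bar\tau_k=\bar\tau_{k-1}$ if $\bar\tau_{k-1}\le\bar\tau_k^{trial}$, else $(1-\epsilon)\bar\tau_k^{trial}$. $\bar\xi_k^{trial}=\frac{\Delta q(x_k,\bar\tau_k,\bar g_k,H_k,\bar d_k)}{\bar\tau_k\|\bar d_k\|_2^2}$; $\bar\xi_k=\bar\xi_{k-1}$ if $\bar\xi_{k-1}\le\bar\xi_k^{trial}$, else $(1-\epsilon)\bar\xi_k^{trial}$. With $D_k=(\bar\tau_kL+\Gamma)\|\bar d_k\|_2^2$, $\hat a_k=\beta_k\Delta q(x_k,\bar\tau_k,\bar g_k,H_k,\bar d_k)/D_k$, $\tilde a_k=\hat a_k-4\|c_k\|_1/D_k$, project both onto $[a_k,a_k+\theta\beta_k^2]$ with $a_k=\frac{\beta_k\bar\xi_k\bar\tau_k}{\bar\tau_kL+\Gamma}$ to get $\widehat\alpha_k,\widetilde\alpha_k$; $\bar\alpha_k=\widehat\alpha_k$ if $\widehat\alpha_k<1$, $1$ if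 $\widetilde\alpha_k\le1\le\widehat\alpha_k$, $\widetilde\alpha_k$ if $\widetilde\alpha_k>1$; $x_{k+1}=x_k+\bar\alpha_k\bar d_k$. Gradient Assumption: $\mathbb{E}_k[\bar g_k]=g_k$ and $\mathbb{E}_k[\|\bar g_k-g_k\|_2^2]\le M$, where $\mathbb{E}_k$ is expectation w.r.t. $\omega$ conditioned on the algorithm having reached $x_k$ at iteration $k$. Deterministic counterpart: $(d_k,y_k)$ solves $H_kd_k+J_k^Ty_k=-g_k$, $J_kd_k=-c_k$. Decompositions: $\bar d_k=\bar u_k+v_k$, $d_k=u_k+v_k$ with $\bar u_k,u_k\in\mathrm{Null}(J_k)$, $v_k\in\mathrm{Range}(J_k^T)$. *)

From HB Require Import structures.
From mathcomp Require Import all_boot all_order all_algebra.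
From mathcomp Require Import all_classical all_reals all_analysis.
Set Implicit Arguments. Unset Strict Implicit. Unset Printing Implicit Defensive.
Import Order.TTheory GRing.Theory Num.Theory.
Import numFieldNormedType.Exports.
Local Open Scope ring_scope.

Definition dotv (R : realType) (n : nat) (u v : 'cV[R]_n) : R :=
  \sum_(i < n) u i 0 * v i 0.
Definition norm2 (R : realType) (n : nat) (u : 'cV[R]_n) : R :=
  Num.sqrt (dotv u u).

Definition convex_set_cV (R : realType) (n : nat) (X : set 'cV[R]_n) : Prop :=
  forall x y (t : R), X x -> X y -> 0 <= t -> t <= 1 ->
    X (t *: x + (1 - t) *: y).

(* the singular values of J (m x n, m <= n) are the square roots of the
   eigenvalues of J J^T; "all singular values >= s" *)
Definition singvals_ge (R : realType) (m n : nat) (J : 'M[R]_(m, n)) (s : R)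
  : Prop :=
  forall a : R, eigenvalue (J *m J^T) a -> s <= Num.sqrt a.

Definition sqp_system (R : realType) (m n : nat) (H : 'M[R]_n)
  (J : 'M[R]_(m, n)) (g : 'cV[R]_n) (cx : 'cV[R]_m)
  (d : 'cV[R]_n) (y : 'cV[R]_m) : Prop :=
  H *m d + J^T *m y = - g /\ J *m d = - cx.

From HB Require Import structures.
From mathcomp Require Import all_boot all_order all_algebra.
From mathcomp Require Import all_classical all_reals all_analysis.
From mathcomp Require Import measurable_realfun ring lra.
Import Order.TTheory GRing.Theory Num.Theory.
Import numFieldNormedType.Exports.
Local Open Scope classical_set_scope.
Local Open Scope ring_scope.
Set Implicit Arguments. Unset Strict Implicit. Unset Printing Implicit Defensive.

(* Since H is positive definite on Null(J) and J has full row rank, the KKT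
   matrix [H J^T; J 0] is invertible, so the solution (d, y) of the SQP system
   is an affine function of the gradient and commutes with expectation.
   Subtracting the deterministic system from the stochastic one gives
   H (dbar - d) + J^T (ybar - y) = -(gbar - g) with J (dbar - d) = 0, whence
   zeta |dbar - d| <= |gbar - g|.  Finally E|gbar - g| <= sqrt M, obtained
   instead of Jensen's inequality by integrating y <= y^2/(2t) + t/2 and
   optimising over t > 0; thus kappa_d = 1/zeta.  E[ubar] = u needs no
   null-space argument, since ubar = dbar - v with v deterministic; of the
   standing assumptions only the singular-value bound is used. *)

Section Euclidean.
Variables (R : realType) (n : nat).
Implicit Types u v w e : 'cV[R]_n.

Lemma dotvE u v : dotv u v = (u^T *m v) 0 0.
Proof. by rewrite /dotv mxE; apply: eq_bigr => i _; rewrite mxE. Qed.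

Lemma dotvv_ge0 u : 0 <= dotv u u.
Proof. by apply: sumr_ge0 => i _; rewrite -expr2 sqr_ge0. Qed.

Lemma norm2_ge0 u : 0 <= norm2 u.
Proof. exact: sqrtr_ge0. Qed.

Lemma sqr_norm2 u : norm2 u ^+ 2 = dotv u u.
Proof. by rewrite sqr_sqrtr // dotvv_ge0. Qed.

Lemma dotvv_eq0 u : dotv u u = 0 -> u = 0.
Proof.
move/eqP; rewrite psumr_eq0 => [/allP u0|i _]; last by rewrite -expr2 sqr_ge0.
apply/matrixP => i j; rewrite ord1 mxE.
by have /= := u0 i (mem_index_enum _); rewrite mulf_eq0 orbb => /eqP.
Qed.

Lemma dotvv_scaleD (a : R) w e :
  dotv (a *: w + e) (a *: w + e) = a ^+ 2 * dotv w w + 2 * a * dotv w e + dotv e e.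
Proof.
by rewrite /dotv !mulr_sumr -!big_split /=; apply: eq_bigr => i _; rewrite !mxE; ring.
Qed.

End Euclidean.

Section KKT.
Variables (R : realType) (n m : nat) (H : 'M[R]_n) (J : 'M[R]_(m, n)).

Definition kkt_mx : 'M[R]_(n + m) := block_mx H J^T J 0.

Lemma kkt_mx_sqp g c d y :
  sqp_system H J g c d y -> kkt_mx *m col_mx d y = col_mx (- g) (- c).
Proof. by case=> Hd Jd; rewrite mul_block_col mul0mx addr0 Hd Jd. Qed.

Lemma sqp_systemB g1 g2 c d1 d2 y1 y2 :
  sqp_system H J g1 c d1 y1 -> sqp_system H J g2 c d2 y2 ->
  sqp_system H J (g1 - g2) 0 (d1 - d2) (y1 - y2).
Proof.
case=> Hd1 Jd1 [Hd2 Jd2]; split; last by rewrite mulmxBr Jd1 Jd2 subrr oppr0.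
by rewrite !mulmxBr addrACA -opprD Hd1 Hd2 opprB opprK addrC.
Qed.

Lemma sqp_system_affine c : kkt_mx \in unitmx ->
  exists (Bd : 'M[R]_n) (ad : 'cV[R]_n) (By : 'M[R]_(m, n)) (ay : 'cV[R]_m),
  forall g d y, sqp_system H J g c d y -> d = Bd *m g + ad /\ y = By *m g + ay.
Proof.
move=> Ku; set A := invmx kkt_mx.
exists (- ulsubmx A), (- (ursubmx A *m c)), (- dlsubmx A), (- (drsubmx A *m c)).
move=> g d y /kkt_mx_sqp /(congr1 (mulmx A)); rewrite mulKmx // -{1}[A]submxK.
by rewrite mul_block_col !mulmxN !mulNmx => /eq_col_mx.
Qed.

Variable zeta : R.
Hypothesis zeta_gt0 : 0 < zeta.
Hypothesis H_coercive_null :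
  forall u, J *m u = 0 -> zeta * norm2 u ^+ 2 <= dotv u (H *m u).

Lemma sqp_system0_norm2_le e w z : sqp_system H J e 0 w z -> zeta * norm2 w <= norm2 e.
Proof.
case=> Hw; rewrite oppr0 => Jw.
have wHw : dotv w (H *m w) = - dotv w e.
  rewrite (canRL (addrK _) Hw) !dotvE mulmxBr mulmxN mulmxA -trmx_mul Jw.
  by rewrite trmx0 mul0mx subr0 !mxE.
have := H_coercive_null Jw; rewrite wHw sqr_norm2 => coer.
(* No Cauchy-Schwarz needed: expand 0 <= |zeta w + e|^2 using w.e = -w.Hw <= -zeta |w|^2. *)
have := dotvv_ge0 (zeta *: w + e); rewrite dotvv_scaleD => sq_ge0.
have coer2 : 2 * zeta * (zeta * dotv w w) <= 2 * zeta * - dotv w e.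
  by rewrite ler_wpM2l // mulr_ge0 // ltW.
have : (zeta * norm2 w) ^+ 2 <= norm2 e ^+ 2 by rewrite exprMn !sqr_norm2; lra.
by rewrite ler_pXn2r // ?nnegrE ?mulr_ge0 ?norm2_ge0 // ltW.
Qed.

Lemma kkt_mx_unit s : 0 < s -> singvals_ge J s -> kkt_mx \in unitmx.
Proof.
move=> s_gt0 Js; rewrite -row_free_unit -kermx_eq0; apply/eqP/row_matrixP => i.
rewrite row0; set u := row i _.
have : u *m kkt_mx = 0 by apply/sub_kermxP; exact: row_sub.
rewrite -[u]hsubmxK mul_row_block mulmx0 addr0 -row_mx0 => /eq_row_mx [Hu Ju].
set a := (lsubmx u)^T.
have Ja : J *m a = 0 by rewrite /a -[J]trmxK -trmx_mul Ju trmx0.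
have aHa : dotv a (H *m a) = 0.
  have /(congr1 (fun M => (M *m a) 0 0)) := Hu.
  rewrite mulmxDl -!mulmxA Ja mulmx0 addr0 mul0mx => uHa.
  by rewrite dotvE trmxK uHa mxE.
have a0 : a = 0.
  apply: dotvv_eq0; apply/eqP; rewrite eq_le dotvv_ge0 andbT.
  by have := H_coercive_null Ja; rewrite aHa sqr_norm2 pmulr_rle0.
have l0 : lsubmx u = 0 by rewrite -[lsubmx u]trmxK -/a a0 trmx0.
rewrite l0 mul0mx add0r in Hu.
suff r0 : rsubmx u = 0 by rewrite l0 r0 row_mx0.
apply/eqP; apply: contraTT s_gt0 => r_neq0.
have ev0 : eigenvalue (J *m J^T) 0.
  by apply/eigenvalueP; exists (rsubmx u); rewrite // mulmxA Hu mul0mx scale0r.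
by have := Js 0 ev0; rewrite sqrtr0 -leNgt.
Qed.

End KKT.

Lemma ler_amgm_sqr (R : realFieldType) (y t : R) :
  0 < t -> y <= (2 * t)^-1 * y ^+ 2 + t / 2.
Proof.
move=> t_gt0; rewrite -subr_ge0.
have -> : (2 * t)^-1 * y ^+ 2 + t / 2 - y = (y - t) ^+ 2 / (2 * t).
  by field; rewrite gt_eqF.
by rewrite divr_ge0 ?sqr_ge0 // ltW // mulr_gt0.
Qed.

Lemma le_inf_amgm_sqrt (R : realType) (x : \bar R) (M : R) :
  (forall t, 0 < t -> (x <= ((2 * t)^-1 * M + t / 2)%:E)%E) ->
  (x <= (Num.sqrt M)%:E)%E.
Proof.
move=> x_le; have [M_gt0|M_le0] := ltrP 0 M.
  have sM_gt0 : 0 < Num.sqrt M by rewrite sqrtr_gt0.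
  apply: (le_trans (x_le _ sM_gt0)); rewrite lee_fin le_eqVlt; apply/orP; left.
  set s := Num.sqrt M in sM_gt0 *; rewrite -[M]sqr_sqrtr ?ltW // -/s.
  by apply/eqP; field; rewrite gt_eqF.
rewrite ler0_sqrtr //; apply/lee_addgt0Pr => e e_gt0; rewrite add0e.
apply: (le_trans (x_le _ e_gt0)); rewrite lee_fin.
have : (2 * e)^-1 * M <= 0 by rewrite mulr_ge0_le0 // invr_ge0 mulr_ge0 // ltW.
lra.
Qed.

Section SecondMoment.
Variables (d : measure_display) (T : measurableType d) (R : realType).
Variable P : probability T R.

Lemma measurable_norm2 n (v : T -> 'cV[R]_n) :
  (forall i, measurable_fun setT (fun w => v w i ord0)) ->
  measurable_fun setT (fun w => norm2 (v w)).
Proof.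
move=> mv; change (measurable_fun setT (Num.sqrt \o fun w => dotv (v w) (v w))).
apply: measurableT_comp.
  by apply: continuous_measurable_fun; exact: sqrt_continuous.
by apply: measurable_sum => i; exact: measurable_funM.
Qed.

Lemma measurable_affine_mx n p (B : 'M[R]_(p, n)) (a : 'cV[R]_p) (G : T -> 'cV[R]_n) :
  (forall j, measurable_fun setT (fun w => G w j ord0)) ->
  forall i, measurable_fun setT (fun w => (B *m G w + a) i ord0).
Proof.
move=> mG i; under eq_fun do rewrite !mxE.
apply: measurable_funD => //; apply: measurable_sum => j.
exact: measurable_funM.
Qed.

Lemma expectation_affine_mx n p (B : 'M[R]_(p, n)) (a : 'cV[R]_p)
    (G : T -> 'cV[R]_n) (g : 'cV[R]_n) :
  (forall j, P.-integrable setT (fun w => (G w j ord0)%:E)) ->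
  (forall j, ('E_P[fun w => G w j ord0] = (g j ord0)%:E)%E) ->
  forall i, ('E_P[fun w => ((B *m G w + a) i ord0)%R] = ((B *m g + a) i ord0)%:E)%E.
Proof.
move=> iG EG i.
have G1 j : (fun w => G w j ord0) \in Lfun P 1 by apply/Lfun1_integrable; exact: iG.
pose Gs := [seq B i j \o* (fun w => G w j ord0) | j <- index_enum 'I_n].
have Gs1 : forall X, X \in Gs -> X \in Lfun P 1.
  by move=> _ /mapP[j _ ->]; exact: Lfun_scale.
have -> : (fun w => (B *m G w + a) i ord0) = (\sum_(X <- Gs) X) \+ cst (a i ord0).
  apply/funext => w; rewrite sumrfctE /Gs /= big_map !mxE.
  by congr (_ + _); apply: eq_bigr => j _; rewrite /= mulrC.
rewrite expectationD ?Lfun_cst //; last by rewrite big_seq rpred_sum.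
rewrite expectation_sum // /Gs big_map expectation_cst !mxE.
under eq_bigr => j _ do rewrite expectationZl // EG.
by rewrite sumEFin EFinD.
Qed.

Lemma expectation_le_amgm (Y : T -> R) t : 0 < t ->
  measurable_fun setT Y -> (forall w, 0 <= Y w) ->
  ('E_P[Y] <= ((2 * t)^-1)%:E * 'E_P[fun w => (Y w ^+ 2)%R] + (t / 2)%:E)%E.
Proof.
move=> t_gt0 mY Y_ge0.
have c_ge0 : 0 <= (2 * t)^-1 by rewrite invr_ge0 mulr_ge0 // ltW.
have mY2 : measurable_fun setT (fun w => Y w ^+ 2).
  by under eq_fun do rewrite expr2; exact: measurable_funM.
rewrite unlock -ge0_integralZl //; last 2 first.
- exact/measurable_EFinP.
- by move=> w _; rewrite lee_fin sqr_ge0.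
rewrite -[(t / 2)%:E]mule1 -(probability_setT P) -integral_cst //.
rewrite -ge0_integralD //; last 3 first.
- by move=> w _; rewrite -EFinM lee_fin mulr_ge0 // sqr_ge0.
- apply: emeasurable_funM; [exact: measurable_cst | exact/measurable_EFinP].
- by move=> w _; rewrite lee_fin divr_ge0 // ltW.
apply: ge0_le_integral => //.
- by move=> w _; rewrite lee_fin.
- exact/measurable_EFinP.
- apply: emeasurable_funD; last exact: measurable_cst.
  apply: emeasurable_funM; [exact: measurable_cst | exact/measurable_EFinP].
- by move=> w _; rewrite -EFinM -EFinD lee_fin ler_amgm_sqr.
Qed.

Lemma expectation_le_sqrt (Y : T -> R) M : measurable_fun setT Y ->
  (forall w, 0 <= Y w) -> ('E_P[fun w => (Y w ^+ 2)%R] <= M%:E)%E ->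
  ('E_P[Y] <= (Num.sqrt M)%:E)%E.
Proof.
move=> mY Y_ge0 YM; apply: le_inf_amgm_sqrt => t t_gt0.
apply: (le_trans (expectation_le_amgm t_gt0 mY Y_ge0)).
rewrite EFinD leeD2r // EFinM; apply: lee_wpmul2l => //.
by rewrite lee_fin invr_ge0 mulr_ge0 // ltW.
Qed.

Lemma expectation_le_scale_sqrt (Y Z : T -> R) k M : 0 <= k ->
  measurable_fun setT Y -> measurable_fun setT Z ->
  (forall w, 0 <= Y w) -> (forall w, 0 <= Z w) -> (forall w, Z w <= k * Y w) ->
  ('E_P[fun w => (Y w ^+ 2)%R] <= M%:E)%E -> ('E_P[Z] <= (k * Num.sqrt M)%:E)%E.
Proof.
move=> k_ge0 mY mZ Y_ge0 Z_ge0 ZY YM.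
have mkY : measurable_fun setT (fun w => k * Y w).
  by apply: measurable_funM => //; exact: measurable_cst.
have EkY : ('E_P[fun w => (k * Y w)%R] = k%:E * 'E_P[Y])%E.
  rewrite unlock -ge0_integralZl // => [|w _]; first exact/measurable_EFinP.
  by rewrite lee_fin.
apply: (le_trans (expectation_le mZ mkY Z_ge0 _ (aeW _ _))) => //.
  by move=> w; rewrite mulr_ge0.
by rewrite EkY EFinM; apply: lee_wpmul2l; rewrite ?lee_fin // expectation_le_sqrt.
Qed.

End SecondMoment.

Theorem lemma3p7
  (R : realType) (n m : nat)
  (X : set 'cV[R]_n)
  (f : 'cV[R]_n -> R) (gradf : 'cV[R]_n -> 'cV[R]_n)
  (c : 'cV[R]_n -> 'cV[R]_m) (Jc : 'cV[R]_n -> 'M[R]_(m, n))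
  (L : R) (gamma : 'I_m -> R) (kappaH zeta M : R)
  (* Standing Assumption *)
  (HXopen : open X) (HXconv : convex_set_cV X)
  (Hfderiv : forall x v, X x -> is_derive x v f (dotv (gradf x) v))
  (Hgradcont : {in X, continuous gradf})
  (Hfbelow : exists lb : R, forall x, X x -> lb <= f x)
  (Hgradbd : exists B : R, forall x, X x -> norm2 (gradf x) <= B)
  (HgradLip : forall x x', X x -> X x' ->
      norm2 (gradf x - gradf x') <= L * norm2 (x - x'))
  (Hcderiv : forall x v, X x -> is_derive x v c (Jc x *m v))
  (Hcbd : exists B : R, forall x, X x -> norm2 (c x) <= B)
  (HJbd : exists B : R, forall x i j, X x -> `|Jc x i j| <= B)
  (HJLip : forall (i : 'I_m) x x', X x -> X x' ->
      norm2 ((row i (Jc x))^T - (row i (Jc x'))^T) <= gamma i * norm2 (x - x'))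
  (Hsing : exists s : R, 0 < s /\ forall x, X x -> singvals_ge (Jc x) s)
  (* Matrix Assumption constants *)
  (Hzeta : 0 < zeta) :
  exists kappad : R, 0 < kappad /\
  forall (x : 'cV[R]_n), X x ->
  forall (H : 'M[R]_n),
    H^T = H ->
    (forall u : 'cV[R]_n, norm2 (H *m u) <= kappaH * norm2 u) ->
    (forall u : 'cV[R]_n, Jc x *m u = 0 -> zeta * norm2 u ^+ 2 <= dotv u (H *m u)) ->
  (* randomness of iteration k, conditioned on x_k = x *)
  forall (dsp : measure_display) (T : measurableType dsp)
         (P : probability T R) (gbar : T -> 'cV[R]_n),
    (forall i, measurable_fun setT (fun w => gbar w i ord0)) ->
    (forall i, P.-integrable setT (fun w => (gbar w i ord0)%:E)) ->
    (forall i, ('E_P[fun w => gbar w i ord0] = (gradf x i ord0)%:E)%E) ->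
    ('E_P[fun w => (norm2 (gbar w - gradf x) ^+ 2)%R] <= M%:E)%E ->
  forall (dbar : T -> 'cV[R]_n) (ybar : T -> 'cV[R]_m)
         (dd : 'cV[R]_n) (yy : 'cV[R]_m)
         (ubar : T -> 'cV[R]_n) (uu vv : 'cV[R]_n),
    (forall w, sqp_system H (Jc x) (gbar w) (c x) (dbar w) (ybar w)) ->
    sqp_system H (Jc x) (gradf x) (c x) dd yy ->
    (forall w, dbar w = ubar w + vv) -> (forall w, Jc x *m ubar w = 0) ->
    dd = uu + vv -> Jc x *m uu = 0 ->
    (exists z : 'cV[R]_m, vv = (Jc x)^T *m z) ->
    (forall i, ('E_P[fun w => dbar w i ord0] = (dd i ord0)%:E)%E) /\
    (forall i, ('E_P[fun w => ubar w i ord0] = (uu i ord0)%:E)%E) /\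
    (forall i, ('E_P[fun w => ybar w i ord0] = (yy i ord0)%:E)%E) /\
    ('E_P[fun w => norm2 (dbar w - dd)] <= (kappad * Num.sqrt M)%R%:E)%E.
Proof.
case: Hsing => s [s_gt0 Js].
exists zeta^-1; split; first by rewrite invr_gt0.
move=> x Xx H _ _ H_coercive dsp T P gbar gbar_meas gbar_int gbar_mean gbar_var
  dbar ybar dd yy ubar uu vv sys_bar sys dbar_split _ dd_split _ _.
have [Bd [ad [By [ay sqp_affine]]]] :=
  sqp_system_affine (c x) (kkt_mx_unit Hzeta H_coercive s_gt0 (Js x Xx)).
have [dd_affine yy_affine] := sqp_affine _ _ _ sys.
have dbar_affine w : dbar w = Bd *m gbar w + ad := (sqp_affine _ _ _ (sys_bar w)).1.
have ybar_affine w : ybar w = By *m gbar w + ay := (sqp_affine _ _ _ (sys_bar w)).2.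
have ubar_affine w : ubar w = Bd *m gbar w + (ad - vv).
  by rewrite addrA -dbar_affine dbar_split addrK.
have mean := expectation_affine_mx _ _ gbar_int gbar_mean.
split; [|split; [|split]] => [i|i|i|].
- by under eq_fun do rewrite dbar_affine; rewrite mean -dd_affine.
- by under eq_fun do rewrite ubar_affine; rewrite mean addrA -dd_affine dd_split addrK.
- by under eq_fun do rewrite ybar_affine; rewrite mean -yy_affine.
apply: (expectation_le_scale_sqrt (Y := fun w => norm2 (gbar w - gradf x))) => //.
- by rewrite invr_ge0 ltW.
- apply: measurable_norm2 => i.
  by have := measurable_affine_mx 1%:M (- gradf x) gbar_meas i; under eq_fun do rewrite mul1mx.
- apply: measurable_norm2 => i.
  by under eq_fun do rewrite dbar_affine -addrA; exact: measurable_affine_mx.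
- by move=> w; exact: norm2_ge0.
- by move=> w; exact: norm2_ge0.
- move=> w; rewrite ler_pdivlMl //.
  exact: (sqp_system0_norm2_le Hzeta H_coercive (sqp_systemB (sys_bar w) sys)).
Qed.
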